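(* Let $\ell$, $x\le y$, $n=y-x$, $\lambda\in\mathbb{R}$ be such that $\inf_{t\in[0,1],\,x\le z\le y-1}\Xi_\ell(t,z)\ge\lambda$, and let $1\le i\le n$. Then the functions $$s\mapsto\frac{\int_{\Delta^{0,s}_{1,i-1}}\exp\big(\xi_{1,i-1}(\mathbf t_{1,i-1})\big)\,d\mathbf t_{1,i-1}}{\int_{\Delta^{0,s}_{1,i-1}}\exp\big(\lambda\sum_{j=1}^{i-1}t_j\big)\,d\mathbf t_{1,i-1}} \quad\text{and}\quad s\mapsto\frac{\int_{\Delta^{s,1}_{i+1,n}}\exp\big(\xi_{i+1,n}(\mathbf t_{i+1,n})\big)\,d\mathbf t_{i+1,n}}{\int_{\Delta^{s,1}_{i+1,n}}\exp\big(\lambda\sum_{j=i+1}^{n}t_j\big)\,d\mathbf t_{i+1,n}}$$ are non-decreasing in $s$ (on $(0,1)$, for those $i$ for which the respective integrals are over a nonempty set of variables).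
   Context: $\ell:[0,1]\times\mathbb{N}\to(0,\infty)$ is the jump intensity of a Markov counting process, with $t\mapsto\ell(t,z)$ continuously differentiable on $[0,1]$ for each $z$. The reciprocal characteristic is $\Xi_\ell(t,z)=\partial_t\log\ell(t,z)+\ell(t,z+1)-\ell(t,z)$. For $1\le j\le n$, $\xi_j:[0,1]\to\mathbb{R}$ is the primitive of $t\mapsto\Xi_\ell(t,x+j-1)$ with $\xi_j(0)=0$, and for $i\le k$, $\xi_{i,k}(\mathbf t_{i,k})=\sum_{j=i}^k\xi_j(t_j)$, where $\mathbf t_{i,k}=(t_i,\dots,t_k)$. For $0\le s\le r\le1$, $\Delta^{s,r}_{i,k}=\{(t_i,\dots,t_k):s<t_i<t_{i+1}<\dots<t_k<r\}$. *)

From Stdlib Require Import Reals List.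
From Coquelicot Require Import Coquelicot.
Import ListNotations.
Open Scope R_scope.

Definition Xi (l : R -> nat -> R) (t : R) (z : nat) : R :=
  Derive (fun u => ln (l u z)) t + l t (S z) - l t z.

Definition xi (l : R -> nat -> R) (x : nat) (j : nat) (t : R) : R :=
  RInt (fun u => Xi l u (x + j - 1)%nat) 0 t.

(* xi_{j0, j0+k-1}(t_{j0},...,t_{j0+k-1}) = sum_j xi_j(t_j),
   the list [t_{j0}; ...; t_{j0+k-1}] holding the variables in order. *)
Fixpoint xi_sum (l : R -> nat -> R) (x : nat) (j0 : nat) (ts : list R) : R :=
  match ts with
  | [] => 0
  | t :: ts' => xi l x j0 t + xi_sum l x (S j0) ts'
  end.

(* Integral of F over the open simplex {s < t_1 < ... < t_k < r} (k variables),
   written as the iterated integral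
     int_s^r dt_1 int_{t_1}^r dt_2 ... int_{t_{k-1}}^r dt_k F(t_1,...,t_k). *)
Fixpoint simplex_int (k : nat) (F : list R -> R) (s r : R) : R :=
  match k with
  | O => F []
  | S k' => RInt (fun t => simplex_int k' (fun ts => F (t :: ts)) t r) s r
  end.

From Stdlib Require Import Reals List Lra Lia.
From Coquelicot Require Import Coquelicot.
Open Scope R_scope.

(* Both ratios have the form P_H(a,b) / P_E(a,b), where P_F(a,b) integrates
   F_j(t_1) F_(j+1)(t_2) ... over the simplex a < t_1 < ... < t_k < b, with
   H_j = exp o xi_j and E_j(t) = exp(lam t).  To pass from [a,b] to [c,d]
   (a <= c, b <= d) substitute t = S(u), where S maps [a,b] onto [c,d] and is
   affine in the coordinate exp(lam t).  Then exp(lam S(u)) S'(u) = alpha exp(lam u),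
   so P_E(c,d) = alpha^k P_E(a,b) exactly.  Since xi_j' = Xi >= lam, the quotient
   H_j / E_j is non-decreasing, and S(u) >= u gives H_j(S u) S'(u) >= alpha H_j(u),
   hence P_H(c,d) >= alpha^k P_H(a,b). *)

Definition family_continuous (H : nat -> R -> R) : Prop :=
  forall j t, continuous (H j) t.

Fixpoint simplex_prod (H : nat -> R -> R) (j k : nat) (s r : R) : R :=
  match k with
  | O => 1
  | S k' => RInt (fun t => H j t * simplex_prod H (S j) k' t r) s r
  end.

Fixpoint list_prod (H : nat -> R -> R) (j : nat) (ts : list R) : R :=
  match ts with
  | nil => 1
  | t :: ts' => H j t * list_prod H (S j) ts'
  end.

Lemma continuous_RInt_lower (g : R -> R) (r t : R) :
  (forall u, continuous g u) -> continuous (fun s => RInt g s r) t.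
Proof.
  intros Hg. apply (continuous_RInt_2 g t r).
  apply filter_forall. intros s. apply (RInt_correct (V := R_CompleteNormedModule)).
  apply (ex_RInt_continuous (V := R_CompleteNormedModule)). intros; apply Hg.
Qed.

Lemma continuous_RInt_upper (g : R -> R) (s t : R) :
  (forall u, continuous g u) -> continuous (fun r => RInt g s r) t.
Proof.
  intros Hg. apply (continuous_RInt_1 g s t).
  apply filter_forall. intros r. apply (RInt_correct (V := R_CompleteNormedModule)).
  apply (ex_RInt_continuous (V := R_CompleteNormedModule)). intros; apply Hg.
Qed.

Lemma simplex_prod_ext_in (H G : nat -> R -> R) (a b : R) :
  (forall j t, a <= t <= b -> H j t = G j t) ->
  forall k j s r, a <= s <= b -> a <= r <= b ->
  simplex_prod H j k s r = simplex_prod G j k s r.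
Proof.
  intros HG k. induction k as [|k IH]; intros j s r Hs Hr; simpl; [reflexivity|].
  apply RInt_ext. intros t Ht.
  assert (Hab : a <= t <= b).
  { split.
    - apply Rle_trans with (Rmin s r); [apply Rmin_glb|]; lra.
    - apply Rle_trans with (Rmax s r); [|apply Rmax_lub]; lra. }
  rewrite HG, IH by lra. reflexivity.
Qed.

Section SimplexProd.

Variable H : nat -> R -> R.
Hypothesis H_cont : family_continuous H.

Lemma simplex_prod_continuous k j r t :
  continuous (fun s => simplex_prod H j k s r) t.
Proof.
  revert j t. induction k as [|k IH]; intros j t; simpl.
  - apply continuous_const.
  - apply continuous_RInt_lower. intros u. apply (continuous_mult (H j)); [apply H_cont | apply IH].
Qed.

Lemma ex_RInt_simplex_prod k j r a b :
  ex_RInt (fun t => H j t * simplex_prod H (S j) k t r) a b.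
Proof.
  apply (ex_RInt_continuous (V := R_CompleteNormedModule)). intros t _.
  apply (continuous_mult (H j)); [apply H_cont | apply simplex_prod_continuous].
Qed.

Lemma simplex_prod_ge0 a b :
  (forall j t, a <= t <= b -> 0 <= H j t) ->
  forall k j s r, a <= s -> s <= r -> r <= b -> 0 <= simplex_prod H j k s r.
Proof.
  intros Hpos k. induction k as [|k IH]; intros j s r Has Hsr Hrb; simpl; [lra|].
  apply RInt_ge_0; [lra | apply ex_RInt_simplex_prod |].
  intros t Ht. apply Rmult_le_pos; [apply Hpos | apply IH]; lra.
Qed.

Lemma simplex_prod_gt0 a b :
  (forall j t, a <= t <= b -> 0 < H j t) ->
  forall k j s r, a <= s -> s < r -> r <= b -> 0 < simplex_prod H j k s r.
Proof.
  intros Hpos k. induction k as [|k IH]; intros j s r Has Hsr Hrb; simpl; [lra|].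
  apply RInt_gt_0; [lra | |].
  - intros t Ht. apply Rmult_lt_0_compat; [apply Hpos | apply IH]; lra.
  - intros t _. apply (continuous_mult (H j)); [apply H_cont | apply simplex_prod_continuous].
Qed.

Lemma simplex_prod_scal c k j s r :
  simplex_prod (fun j t => c * H j t) j k s r = c ^ k * simplex_prod H j k s r.
Proof.
  revert j s r. induction k as [|k IH]; intros j s r; simpl; [ring|].
  rewrite (RInt_ext _ (fun t => scal (c * c ^ k) (H j t * simplex_prod H (S j) k t r))).
  - apply (RInt_scal (V := R_CompleteNormedModule)), ex_RInt_simplex_prod.
  - intros t _. rewrite IH. unfold scal; simpl; unfold mult; simpl. ring.
Qed.

Lemma simplex_prod_comp (Sf dS : R -> R) k j a b : a <= b ->
  (forall x, a <= x <= b -> is_derive Sf x (dS x) /\ continuous dS x) ->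
  simplex_prod H j k (Sf a) (Sf b) =
  simplex_prod (fun j w => dS w * H j (Sf w)) j k a b.
Proof.
  revert j a. induction k as [|k IH]; intros j a Hab HSf; simpl; [reflexivity|].
  rewrite <- (RInt_comp (fun t => H j t * simplex_prod H (S j) k t (Sf b)) Sf dS).
  - apply RInt_ext. intros w Hw.
    rewrite Rmin_left, Rmax_right in Hw by lra.
    rewrite IH; [| lra | intros; apply HSf; lra].
    unfold scal; simpl; unfold mult; simpl. ring.
  - intros w _. apply (continuous_mult (H j)); [apply H_cont | apply simplex_prod_continuous].
  - intros w Hw. rewrite Rmin_left, Rmax_right in Hw by lra. auto.
Qed.

Lemma simplex_int_list_prod k j (F : list R -> R) (c s r : R) : s <= r ->
  (forall ts, length ts = k -> List.Forall (fun t => s <= t <= r) ts ->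
     F ts = c * list_prod H j ts) ->
  simplex_int k F s r = c * simplex_prod H j k s r.
Proof.
  revert j F c s. induction k as [|k IH]; intros j F c s Hsr HF; simpl.
  - apply HF; [reflexivity | constructor].
  - rewrite (RInt_ext _ (fun t => scal c (H j t * simplex_prod H (S j) k t r))).
    + apply (RInt_scal (V := R_CompleteNormedModule)), ex_RInt_simplex_prod.
    + intros t Ht. rewrite Rmin_left, Rmax_right in Ht by lra.
      rewrite (IH (S j) _ (c * H j t)); [unfold scal; simpl; unfold mult; simpl; ring | lra |].
      intros ts Hlen Hts. rewrite HF; simpl; [ring | congruence |].
      constructor; [lra|]. eapply List.Forall_impl; [|exact Hts]. simpl; intros; lra.
Qed.

End SimplexProd.

Lemma simplex_prod_le (H G : nat -> R -> R) (a b : R) :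
  family_continuous H -> family_continuous G ->
  (forall j t, a <= t <= b -> 0 <= H j t <= G j t) ->
  forall k j s r, a <= s -> s <= r -> r <= b ->
  simplex_prod H j k s r <= simplex_prod G j k s r.
Proof.
  intros H_cont G_cont HG k. induction k as [|k IH]; intros j s r Has Hsr Hrb; simpl; [lra|].
  apply RInt_le; [lra | apply ex_RInt_simplex_prod, H_cont | apply ex_RInt_simplex_prod, G_cont |].
  intros t Ht. destruct (HG j t) as [H0 HGt]; [lra|].
  apply Rmult_le_compat; [lra | | lra | apply IH; lra].
  apply (simplex_prod_ge0 H H_cont a b); [intros; apply HG; lra | lra | lra | lra].
Qed.

Lemma simplex_prod_le_in (H G : nat -> R -> R) (a b : R) :
  family_continuous H -> (forall j t, a <= t <= b -> continuous (G j) t) ->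
  (forall j t, a <= t <= b -> 0 <= H j t <= G j t) ->
  forall k j s r, a <= s -> s <= r -> r <= b ->
  simplex_prod H j k s r <= simplex_prod G j k s r.
Proof.
  intros H_cont G_cont HG k j s r Has Hsr Hrb.
  set (G' j := extension_C0 (G j) a b).
  assert (HG' : forall j t, a <= t <= b -> G' j t = G j t)
    by (intros; apply extension_C0_ext; simpl; lra).
  rewrite (simplex_prod_ext_in G G' a b) by (try (intros; symmetry; apply HG'); lra).
  apply (simplex_prod_le H G' a b H_cont); [| intros; rewrite HG'; auto | lra | lra | lra].
  intros j' t. apply (extension_C0_continuous (G j')); simpl; [lra|]. intros; apply G_cont; lra.
Qed.

Section Transport.

Variables (H E : nat -> R -> R) (Sf dS : R -> R) (alpha a b : R).
Hypotheses (H_cont : family_continuous H) (E_cont : family_continuous E).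
Hypothesis H_ge0 : forall j t, 0 <= H j t.
Hypothesis E_pos : forall j t, 0 < E j t.
Hypothesis H_div_E_mono : forall j t u, t <= u -> H j t * E j u <= H j u * E j t.
Hypotheses (alpha_ge0 : 0 <= alpha) (a_le_b : a <= b).
Hypothesis Sf_deriv : forall x, a <= x <= b -> is_derive Sf x (dS x) /\ continuous dS x.
Hypothesis Sf_ge : forall x, a <= x <= b -> x <= Sf x.
Hypothesis E_Sf : forall j x, a <= x <= b -> E j (Sf x) * dS x = alpha * E j x.

Lemma simplex_prod_transport_eq k j :
  simplex_prod E j k (Sf a) (Sf b) = alpha ^ k * simplex_prod E j k a b.
Proof.
  rewrite (simplex_prod_comp E E_cont Sf dS) by assumption.
  rewrite (simplex_prod_ext_in _ (fun j w => alpha * E j w) a b) by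
    (try (intros; rewrite Rmult_comm; apply E_Sf); lra).
  apply simplex_prod_scal, E_cont.
Qed.

Lemma simplex_prod_transport_ge k j :
  alpha ^ k * simplex_prod H j k a b <= simplex_prod H j k (Sf a) (Sf b).
Proof.
  rewrite (simplex_prod_comp H H_cont Sf dS) by assumption.
  rewrite <- simplex_prod_scal by assumption.
  apply (simplex_prod_le_in _ _ a b); try lra.
  - intros j' t. apply (continuous_mult (fun _ => alpha)); [apply continuous_const | apply H_cont].
  - intros j' t Ht. apply (continuous_mult dS); [apply Sf_deriv; lra|].
    apply (continuous_comp Sf (H j')); [|apply H_cont].
    apply (ex_derive_continuous Sf). eexists. apply Sf_deriv; lra.
  - intros j' t Ht.
    assert (ESf := E_pos j' (Sf t)). assert (Et := E_pos j' t).
    assert (HE := E_Sf j' t Ht). assert (Hmono := H_div_E_mono j' t (Sf t) (Sf_ge t Ht)).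
    assert (dS_ge0 : 0 <= dS t) by nra.
    split; [apply Rmult_le_pos; auto|].
    apply Rmult_le_reg_r with (E j' t); [assumption|].
    replace (alpha * H j' t * E j' t) with (H j' t * (E j' (Sf t) * dS t)) by (rewrite HE; ring).
    replace (dS t * H j' (Sf t) * E j' t) with (H j' (Sf t) * E j' t * dS t) by ring.
    rewrite <- Rmult_assoc. apply Rmult_le_compat_r; assumption.
Qed.

End Transport.

Definition is_exp_transport (lam a b c d : R) (Sf dS : R -> R) (alpha : R) : Prop :=
  0 < alpha /\ Sf a = c /\ Sf b = d /\
  (forall x, a <= x <= b -> is_derive Sf x (dS x) /\ continuous dS x) /\
  (forall x, a <= x <= b -> x <= Sf x) /\
  (forall x, a <= x <= b -> exp (lam * Sf x) * dS x = alpha * exp (lam * x)).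

Lemma exp_scaled_diff_pos lam u v :
  lam <> 0 -> u < v -> 0 < (exp (lam * v) - exp (lam * u)) * lam.
Proof.
  intros Hlam Huv. destruct (Rlt_or_le lam 0) as [Hneg | Hpos].
  - assert (exp (lam * v) < exp (lam * u)) by (apply exp_increasing; nra). nra.
  - assert (exp (lam * u) < exp (lam * v)) by (apply exp_increasing; nra). nra.
Qed.

Lemma exp_scaled_diff_nonneg lam u v :
  lam <> 0 -> 0 <= (exp (lam * v) - exp (lam * u)) * lam <-> u <= v.
Proof.
  intros Hlam. split; intros Huv.
  - destruct (Rle_or_lt u v) as [|Hvu]; [assumption|].
    assert (H := exp_scaled_diff_pos lam v u Hlam Hvu). lra.
  - destruct (Req_dec u v) as [<- | Hne]; [lra|].
    left. apply exp_scaled_diff_pos; lra.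
Qed.

Lemma affine_exp_transport a b c d : a < b -> c < d -> a <= c -> b <= d ->
  is_exp_transport 0 a b c d (fun x => c + (d - c) / (b - a) * (x - a))
    (fun _ => (d - c) / (b - a)) ((d - c) / (b - a)).
Proof.
  intros Hab Hcd Hac Hbd. set (alpha := (d - c) / (b - a)).
  assert (Hscale : alpha * (b - a) = d - c) by (unfold alpha; field; lra).
  split; [|split; [|split; [|split; [|split]]]].
  - apply Rdiv_lt_0_compat; lra.
  - ring.
  - lra.
  - intros x Hx. split; [auto_derive; [exact I | ring] | apply continuous_const].
  - intros x Hx.
    assert (Hgap : (c + alpha * (x - a) - x) * (b - a) = (c - a) * (b - x) + (d - b) * (x - a))
      by (unfold alpha; field; lra).
    nra.
  - intros x Hx. rewrite !Rmult_0_l, exp_0. ring.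
Qed.

(* exp (lam * S x) for the transport map S of [a,b] onto [c,d]: the affine
   interpolation, in the variable exp (lam * x), of exp (lam * c) and exp (lam * d). *)
Definition exp_interp (lam a b c d x : R) : R :=
  exp (lam * c) + (exp (lam * d) - exp (lam * c)) / (exp (lam * b) - exp (lam * a))
                  * (exp (lam * x) - exp (lam * a)).

Lemma exp_interp_bounds lam a b c d x : lam <> 0 -> a < b -> a <= c -> b <= d -> a <= x <= b ->
  0 < exp_interp lam a b c d x /\
  0 <= (exp_interp lam a b c d x - exp (lam * x)) * lam.
Proof.
  intros Hlam Hab Hac Hbd Hx. unfold exp_interp.
  set (ea := exp (lam * a)). set (eb := exp (lam * b)).
  set (ec := exp (lam * c)). set (ed := exp (lam * d)). set (ex := exp (lam * x)).
  set (q := ec + (ed - ec) / (eb - ea) * (ex - ea)).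
  assert (Hba : 0 < (eb - ea) * lam) by (apply exp_scaled_diff_pos; assumption).
  assert (Hba0 : eb - ea <> 0) by (intros E; rewrite E in Hba; lra).
  assert (Hxa : 0 <= (ex - ea) * lam) by (apply exp_scaled_diff_nonneg; lra).
  assert (Hbx : 0 <= (eb - ex) * lam) by (apply exp_scaled_diff_nonneg; lra).
  split.
  - apply Rmult_lt_reg_r with ((eb - ea) * lam); [assumption|].
    replace (q * ((eb - ea) * lam))
      with (ec * ((eb - ex) * lam) + ed * ((ex - ea) * lam)) by (unfold q; field; assumption).
    set (m := Rmin ec ed).
    assert (Hm : 0 < m * ((eb - ea) * lam))
      by (apply Rmult_lt_0_compat; [apply Rmin_glb_lt; apply exp_pos | assumption]).
    assert (m * ((eb - ex) * lam) <= ec * ((eb - ex) * lam))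
      by (apply Rmult_le_compat_r; [assumption | apply Rmin_l]).
    assert (m * ((ex - ea) * lam) <= ed * ((ex - ea) * lam))
      by (apply Rmult_le_compat_r; [assumption | apply Rmin_r]).
    lra.
  - assert (Hca : 0 <= (ec - ea) * lam) by (apply exp_scaled_diff_nonneg; lra).
    assert (Hdb : 0 <= (ed - eb) * lam) by (apply exp_scaled_diff_nonneg; lra).
    apply Rmult_le_reg_r with ((eb - ea) * lam); [assumption|].
    replace ((q - ex) * lam * ((eb - ea) * lam))
      with ((ec - ea) * lam * ((eb - ex) * lam) + (ed - eb) * lam * ((ex - ea) * lam))
      by (unfold q; field; assumption).
    rewrite Rmult_0_l. apply Rplus_le_le_0_compat; apply Rmult_le_pos; assumption.
Qed.

Lemma log_exp_transport lam a b c d : lam <> 0 -> a < b -> c < d -> a <= c -> b <= d ->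
  let alpha := (exp (lam * d) - exp (lam * c)) / (exp (lam * b) - exp (lam * a)) in
  is_exp_transport lam a b c d (fun x => ln (exp_interp lam a b c d x) / lam)
    (fun x => alpha * exp (lam * x) / exp_interp lam a b c d x) alpha.
Proof.
  intros Hlam Hab Hcd Hac Hbd alpha.
  assert (Hba : 0 < (exp (lam * b) - exp (lam * a)) * lam) by (apply exp_scaled_diff_pos; assumption).
  assert (Hba0 : exp (lam * b) - exp (lam * a) <> 0) by (intros E; rewrite E in Hba; lra).
  assert (Hexp : forall x, a <= x <= b ->
    exp (lam * (ln (exp_interp lam a b c d x) / lam)) = exp_interp lam a b c d x).
  { intros x Hx. rewrite <- (exp_ln (exp_interp lam a b c d x)) at 2
      by (apply exp_interp_bounds; assumption).
    f_equal. field. assumption. }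
  split; [|split; [|split; [|split; [|split]]]].
  - replace alpha with ((exp (lam * d) - exp (lam * c)) * lam / ((exp (lam * b) - exp (lam * a)) * lam))
      by (unfold alpha; field; lra).
    apply Rdiv_lt_0_compat; [apply exp_scaled_diff_pos|]; assumption.
  - assert (Hqa : exp_interp lam a b c d a = exp (lam * c)) by (unfold exp_interp; ring).
    cbv beta. rewrite Hqa, ln_exp. field. assumption.
  - assert (Hqb : exp_interp lam a b c d b = exp (lam * d))
      by (unfold exp_interp; field; assumption).
    cbv beta. rewrite Hqb, ln_exp. field. assumption.
  - intros x Hx.
    assert (Hq : 0 < exp_interp lam a b c d x) by (apply exp_interp_bounds; assumption).
    assert (Hd : is_derive (exp_interp lam a b c d) x (alpha * (lam * exp (lam * x))))
      by (unfold exp_interp, alpha; auto_derive; [exact I | ring]).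
    split.
    + auto_derive; [repeat split; [eexists; exact Hd | exact Hq]|].
      replace (Derive _ x) with (alpha * (lam * exp (lam * x)))
        by (symmetry; apply is_derive_unique, Hd).
      field. lra.
    + apply (ex_derive_continuous (fun x => alpha * exp (lam * x) / exp_interp lam a b c d x)).
      auto_derive. repeat split; [eexists; exact Hd | lra].
  - intros x Hx. apply (exp_scaled_diff_nonneg lam); [assumption|].
    rewrite Hexp by assumption. apply exp_interp_bounds; assumption.
  - intros x Hx. assert (Hq : 0 < exp_interp lam a b c d x) by (apply exp_interp_bounds; assumption).
    rewrite Hexp by assumption. field. lra.
Qed.

Lemma exp_transport_exists lam a b c d : a < b -> c < d -> a <= c -> b <= d ->
  exists Sf dS alpha, is_exp_transport lam a b c d Sf dS alpha.
Proof.
  intros Hab Hcd Hac Hbd. destruct (Req_dec lam 0) as [-> | Hlam].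
  - eexists _, _, _. apply affine_exp_transport; assumption.
  - eexists _, _, _. apply log_exp_transport; assumption.
Qed.

Definition exp_family (lam : R) (j : nat) (t : R) : R := exp (lam * t).

Lemma exp_family_continuous lam : family_continuous (exp_family lam).
Proof.
  intros j t. apply (ex_derive_continuous (exp_family lam j)).
  unfold exp_family. auto_derive. exact I.
Qed.

Lemma simplex_prod_ratio_mono (H : nat -> R -> R) (lam : R) :
  family_continuous H -> (forall j t, 0 < H j t) ->
  (forall j t u, t <= u -> H j t * exp (lam * u) <= H j u * exp (lam * t)) ->
  forall j k a b c d, a < b -> c < d -> a <= c -> b <= d ->
  simplex_prod H j k a b / simplex_prod (exp_family lam) j k a b <=
  simplex_prod H j k c d / simplex_prod (exp_family lam) j k c d.
Proof.
  intros H_cont H_pos H_mono j k a b c d Hab Hcd Hac Hbd.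
  destruct (exp_transport_exists lam a b c d Hab Hcd Hac Hbd)
    as (Sf & dS & alpha & Halpha & <- & <- & Sf_deriv & Sf_ge & exp_Sf).
  rewrite (simplex_prod_transport_eq (exp_family lam) Sf dS alpha a b);
    [| apply exp_family_continuous | lra | assumption | intros; apply exp_Sf; assumption].
  assert (Hge : alpha ^ k * simplex_prod H j k a b <= simplex_prod H j k (Sf a) (Sf b)).
  { apply (simplex_prod_transport_ge H (exp_family lam) Sf dS); try assumption; try lra.
    - intros; apply Rlt_le, H_pos.
    - intros; apply exp_pos.
    - intros j' x Hx; apply exp_Sf, Hx. }
  assert (HE : 0 < simplex_prod (exp_family lam) j k a b).
  { apply (simplex_prod_gt0 _ (exp_family_continuous lam) a b); try lra.
    intros; apply exp_pos. }
  assert (Hak : 0 < alpha ^ k) by (apply pow_lt, Halpha).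
  replace (simplex_prod H j k a b / simplex_prod (exp_family lam) j k a b)
    with (alpha ^ k * simplex_prod H j k a b / (alpha ^ k * simplex_prod (exp_family lam) j k a b))
    by (field; lra).
  apply Rmult_le_compat_r; [left; apply Rinv_0_lt_compat; nra | exact Hge].
Qed.

Lemma exp_le_compat u v : u <= v -> exp u <= exp v.
Proof.
  intros Huv. destruct (Req_dec u v) as [-> | Hne]; [lra|].
  left. apply exp_increasing. lra.
Qed.

Lemma continuous_Rmax_l (c : R) (f : R -> R) (u : R) :
  continuous f u -> continuous (fun v => Rmax c (f v)) u.
Proof.
  intros Hf.
  apply (continuous_ext (fun v => (c + f v + Rabs (c - f v)) / 2)).
  { intros v. unfold Rmax. destruct Rle_dec; unfold Rabs; destruct Rcase_abs; lra. }
  apply (continuous_mult (fun v => c + f v + Rabs (c - f v)) (fun _ => / 2));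
    [| apply continuous_const].
  apply (continuous_plus (fun v => c + f v)); [apply (continuous_plus (fun _ => c)) |].
  - apply continuous_const.
  - exact Hf.
  - apply continuous_Rabs_comp, (continuous_minus (fun _ => c)); [apply continuous_const | exact Hf].
Qed.

(* Unlike [Xi], which differentiates [ln o l], this form is continuous at the
   endpoints of [0,1] as a function on R. *)
Definition Xi_explicit (l : R -> nat -> R) (z : nat) (w : R) : R :=
  Derive (fun v => l v z) w / l w z + l w (S z) - l w z.

Section XiWeight.

Variable l : R -> nat -> R.
Hypothesis l_pos : forall z t, 0 <= t <= 1 -> 0 < l t z.
Hypothesis l_C1 : forall z t, 0 <= t <= 1 ->
  ex_derive (fun u => l u z) t /\ continuous (fun u => Derive (fun v => l v z) u) t.

Lemma Xi_eq_explicit z w : 0 <= w <= 1 -> Xi l w z = Xi_explicit l z w.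
Proof.
  intros Hw. unfold Xi, Xi_explicit. do 2 f_equal.
  apply is_derive_unique.
  assert (Hd := is_derive_comp ln (fun u => l u z) w _ _
    (is_derive_ln _ (l_pos z w Hw)) (Derive_correct _ _ (proj1 (l_C1 z w Hw)))).
  exact Hd.
Qed.

Lemma Xi_explicit_continuous z w : 0 <= w <= 1 -> continuous (Xi_explicit l z) w.
Proof.
  intros Hw.
  assert (Hl : forall z', continuous (fun u => l u z') w)
    by (intros z'; apply (ex_derive_continuous (fun u => l u z')), l_C1, Hw).
  unfold Xi_explicit.
  apply (continuous_minus (fun u => _ + l u (S z))); [|apply Hl].
  apply (continuous_plus (fun u => _ / l u z)); [|apply Hl].
  apply (continuous_mult (fun u => Derive (fun v => l v z) u)); [apply l_C1, Hw|].
  apply continuous_Rinv_comp; [apply Hl|]. apply Rgt_not_eq, l_pos, Hw.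
Qed.

Variables (x : nat) (lam : R).

(* Flooring Xi at lam and extending it constantly outside [0,1] does not change
   xi_j on [0,1] for the indices where Xi >= lam, but makes every weight
   continuous on R with weight / exp(lam .) non-decreasing everywhere. *)
Definition xi_rate (j : nat) (u : R) : R :=
  Rmax lam (extension_C0 (Xi_explicit l (x + j - 1)) 0 1 u).

Definition xi_weight (j : nat) (t : R) : R := exp (RInt (xi_rate j) 0 t).

Lemma xi_rate_continuous j u : continuous (xi_rate j) u.
Proof.
  apply continuous_Rmax_l, (extension_C0_continuous (Xi_explicit l (x + j - 1))); simpl; [lra|].
  intros; apply Xi_explicit_continuous; lra.
Qed.

Lemma ex_RInt_xi_rate j s r : ex_RInt (xi_rate j) s r.
Proof.
  apply (ex_RInt_continuous (V := R_CompleteNormedModule)). intros; apply xi_rate_continuous.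
Qed.

Lemma xi_weight_continuous : family_continuous xi_weight.
Proof.
  intros j t. apply (continuous_comp (fun t => RInt (xi_rate j) 0 t) exp).
  - apply continuous_RInt_upper, xi_rate_continuous.
  - apply continuous_exp.
Qed.

Lemma xi_weight_ratio_mono j t u : t <= u ->
  xi_weight j t * exp (lam * u) <= xi_weight j u * exp (lam * t).
Proof.
  intros Htu. unfold xi_weight. rewrite <- !exp_plus. apply exp_le_compat.
  rewrite <- (RInt_Chasles (V := R_CompleteNormedModule) (xi_rate j) 0 t u)
    by apply ex_RInt_xi_rate.
  assert (Hrate : RInt (fun _ => lam) t u <= RInt (xi_rate j) t u).
  { apply RInt_le; [assumption | | apply ex_RInt_xi_rate | intros; apply Rmax_l].
    apply ex_RInt_const. }
  rewrite RInt_const in Hrate. unfold scal in Hrate; simpl in Hrate; unfold mult in Hrate; simpl in Hrate.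
  unfold plus; simpl. lra.
Qed.

Lemma exp_xi_eq_weight j t : (forall w, 0 <= w <= 1 -> lam <= Xi l w (x + j - 1)) ->
  0 <= t <= 1 -> exp (xi l x j t) = xi_weight j t.
Proof.
  intros Hlam Ht. unfold xi, xi_weight. f_equal. apply RInt_ext. intros u Hu.
  rewrite Rmin_left, Rmax_right in Hu by lra.
  unfold xi_rate. rewrite extension_C0_ext by (simpl; lra).
  rewrite <- Xi_eq_explicit by lra. rewrite Rmax_right; [reflexivity|]. apply Hlam. lra.
Qed.

Lemma exp_xi_sum_list_prod ts j0 :
  (forall j, (j0 <= j)%nat -> (j < j0 + length ts)%nat ->
     forall w, 0 <= w <= 1 -> lam <= Xi l w (x + j - 1)) ->
  List.Forall (fun t => 0 <= t <= 1) ts ->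
  exp (xi_sum l x j0 ts) = list_prod xi_weight j0 ts.
Proof.
  revert j0. induction ts as [|t ts IH]; intros j0 Hlam Hts; simpl.
  - apply exp_0.
  - inversion Hts as [|? ? Ht Hts']; subst.
    rewrite exp_plus, exp_xi_eq_weight, IH; try assumption; try reflexivity.
    + intros j Hj1 Hj2. apply Hlam; simpl; lia.
    + apply Hlam; simpl; lia.
Qed.

Lemma simplex_int_exp_xi_sum j0 k s r :
  (forall j, (j0 <= j)%nat -> (j < j0 + k)%nat ->
     forall w, 0 <= w <= 1 -> lam <= Xi l w (x + j - 1)) ->
  0 <= s -> s <= r -> r <= 1 ->
  simplex_int k (fun ts => exp (xi_sum l x j0 ts)) s r = simplex_prod xi_weight j0 k s r.
Proof.
  intros Hlam Hs Hsr Hr. rewrite <- (Rmult_1_l (simplex_prod _ _ _ _ _)).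
  apply simplex_int_list_prod; [apply xi_weight_continuous | assumption |].
  intros ts Hlen Hts. rewrite Rmult_1_l. apply exp_xi_sum_list_prod.
  - rewrite Hlen. exact Hlam.
  - eapply List.Forall_impl; [|exact Hts]. simpl; intros; lra.
Qed.

End XiWeight.

Lemma exp_sum_list_prod lam ts j :
  exp (lam * fold_right Rplus 0 ts) = list_prod (exp_family lam) j ts.
Proof.
  revert j. induction ts as [|t ts IH]; intros j; simpl.
  - rewrite Rmult_0_r. apply exp_0.
  - rewrite Rmult_plus_distr_l, exp_plus, (IH (S j)). reflexivity.
Qed.

Lemma simplex_int_exp_sum lam k j s r : s <= r ->
  simplex_int k (fun ts => exp (lam * fold_right Rplus 0 ts)) s r =
  simplex_prod (exp_family lam) j k s r.
Proof.
  intros Hsr. rewrite <- (Rmult_1_l (simplex_prod _ _ _ _ _)).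
  apply simplex_int_list_prod; [apply exp_family_continuous | assumption |].
  intros ts _ _. rewrite Rmult_1_l. apply exp_sum_list_prod.
Qed.

Theorem lemma3p4
  (l : R -> nat -> R)
  (l_pos : forall z t, 0 <= t <= 1 -> 0 < l t z)
  (l_C1 : forall z t, 0 <= t <= 1 ->
      ex_derive (fun u => l u z) t /\
      continuous (fun u => Derive (fun v => l v z) u) t)
  (x y : nat) (hxy : (x <= y)%nat) (lam : R)
  (hinf : forall t z, 0 <= t <= 1 -> (x <= z)%nat -> (z <= y - 1)%nat ->
      lam <= Xi l t z)
  (i : nat) (hi1 : (1 <= i)%nat) (hin : (i <= y - x)%nat) :
  ((2 <= i)%nat ->
     forall s1 s2, 0 < s1 -> s1 <= s2 -> s2 < 1 ->
       simplex_int (i - 1) (fun ts => exp (xi_sum l x 1 ts)) 0 s1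
         / simplex_int (i - 1) (fun ts => exp (lam * fold_right Rplus 0 ts)) 0 s1
       <=
       simplex_int (i - 1) (fun ts => exp (xi_sum l x 1 ts)) 0 s2
         / simplex_int (i - 1) (fun ts => exp (lam * fold_right Rplus 0 ts)) 0 s2)
  /\
  ((i + 1 <= y - x)%nat ->
     forall s1 s2, 0 < s1 -> s1 <= s2 -> s2 < 1 ->
       simplex_int (y - x - i) (fun ts => exp (xi_sum l x (i + 1) ts)) s1 1
         / simplex_int (y - x - i) (fun ts => exp (lam * fold_right Rplus 0 ts)) s1 1
       <=
       simplex_int (y - x - i) (fun ts => exp (xi_sum l x (i + 1) ts)) s2 1
         / simplex_int (y - x - i) (fun ts => exp (lam * fold_right Rplus 0 ts)) s2 1).
Proof.
  assert (Hrate : forall j0 k, (1 <= j0)%nat -> (j0 + k <= y - x + 1)%nat ->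
    forall j, (j0 <= j)%nat -> (j < j0 + k)%nat ->
    forall w, 0 <= w <= 1 -> lam <= Xi l w (x + j - 1))
    by (intros; apply hinf; [assumption | lia | lia]).
  pose proof (simplex_prod_ratio_mono (xi_weight l x lam) lam
    (xi_weight_continuous l l_pos l_C1 x lam) (fun j t => exp_pos _)
    (xi_weight_ratio_mono l l_pos l_C1 x lam)) as Hratio.
  split; intros Hi s1 s2 Hs1 Hs12 Hs2.
  - rewrite !(simplex_int_exp_xi_sum l l_pos l_C1 x lam 1 (i - 1)),
      !(simplex_int_exp_sum lam (i - 1) 1) by (try apply Hrate; lia || lra).
    apply Hratio; lra.
  - rewrite !(simplex_int_exp_xi_sum l l_pos l_C1 x lam (i + 1) (y - x - i)),
      !(simplex_int_exp_sum lam (y - x - i) (i + 1)) by (try apply Hrate; lia || lra).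
    apply Hratio; lra.
Qed.
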